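(* Let $\mathcal F$ be a homogeneous foliation of degree $d$ on $\mathbb P^2$, i.e. defined in some affine coordinates $(x,y)$ by a vector field whose coefficients are homogeneous polynomials of degree $d$, and let $O=(0,0)$. If the curvature $K(\mathrm{Leg}\,\mathcal F)$ is holomorphic on $\check{\mathbb P}^2\setminus\check O$, then $K(\mathrm{Leg}\,\mathcal F)\equiv 0$.
   Context: $\check O\subset\check{\mathbb P}^2$ denotes the dual line of $O$, consisting of the lines through $O$. With affine coordinates $(p,q)$ on $\check{\mathbb P}^2$ corresponding to the line $\{y=px+q\}$, the Legendre transform $\mathrm{Leg}\,\mathcal F$ of the foliation given by $A\partial_x+B\partial_y$ is the $d$-web on $\check{\mathbb P}^2$ defined by the implicit differential equation $B(x,px+q)-pA(x,px+q)=0$ with $x=-\frac{dq}{dp}$. The curvature $K(\mathcal W)$ of a web $\mathcal W$: for a $3$-web given locally off its discriminant by $1$-forms $\omega_1,\omega_2,\omega_3$ normalized so that $\omega_1+\omega_2+\omega_3=0$, there is a unique $1$-form $\eta$ with $d\omega_i=\eta\wedge\omega_i$, and $K=d\eta$; for a $k$-web with $k>3$ it is the sum of the curvatures of all its $3$-subwebs. It is a meromorphic $2$-form with poles in the discriminant. *)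

(* C = R[i] (complex numbers over a realType R, i.e. the
   field of complex numbers); bivariate polynomials are multinomials
   {mpoly C[2]} with 'X_0 = x and 'X_1 = y. *)
From HB Require Import structures.
From mathcomp Require Import all_boot all_order all_algebra.
From mathcomp Require Import reals.
From mathcomp.real_closed Require Import complex.
From mathcomp Require Import mpoly.

Set Implicit Arguments.
Unset Strict Implicit.
Unset Printing Implicit Defensive.

Import Order.TTheory GRing.Theory Num.Theory.
Local Open Scope ring_scope.

(* The foliation: vector field A d/dx + B d/dy.                              *)

(* A and B have no common non-constant factor (the vector field has        *)
(* isolated zeros, i.e. it is saturated and really defines the foliation). *)
Definition mpoly_coprime (C : fieldType) (A B : {mpoly C[2]}) : Prop :=
  forall h : {mpoly C[2]},
    (exists u, A = h * u) -> (exists v, B = h * v) -> (msize h <= 1)%N.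

(* Homogeneous foliation of degree d on P^2: A, B homogeneous of degree d,  *)
(* coprime, and x B - y A <> 0 (so that the foliation has degree exactly d; *)
(* otherwise it would be the radial foliation).                             *)
Definition homogeneous_foliation (C : fieldType) (d : nat)
    (A B : {mpoly C[2]}) : Prop :=
  [/\ A \is d.-homog, B \is d.-homog, mpoly_coprime A B
    & 'X_0 * B - 'X_1 * A != 0].

(* Differential-algebraic model of (germs of meromorphic functions on) the  *)
(* affine chart (p,q) of the dual plane, where (p,q) <-> line {y = px + q}.  *)

Section DiffModel.
Variables (C L : fieldType).

Definition is_derivation (D : L -> L) : Prop :=
  (forall u v, D (u + v) = D u + D v) /\
  (forall u v, D (u * v) = D u * v + u * D v).

Definition dual_chart_model (iota : {rmorphism C -> L}) (Dp Dq : L -> L)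
    (P Q : L) : Prop :=
  [/\ is_derivation Dp, is_derivation Dq,
      (forall u, Dp (Dq u) = Dq (Dp u)),
      (forall c, Dp (iota c) = 0 /\ Dq (iota c) = 0)
    & [/\ Dp P = 1, Dq P = 0, Dp Q = 0 & Dq Q = 1]].

(* F(p,q,X) = B(X, pX + q) - p A(X, pX + q), as a polynomial in X over L.   *)
Definition legendre_poly (iota : {rmorphism C -> L}) (A B : {mpoly C[2]})
    (P Q : L) : {poly L} :=
  let ev := mmap (fun c => (iota c)%:P)
                 (fun i : 'I_2 => if i == 0 then 'X else P *: 'X + Q%:P) in
  ev B - P *: ev A.

(* x_0, ..., x_(d-1) are the (pairwise distinct) slopes x = -dq/dp of the   *)
(* d foliations of the d-web Leg F, i.e. the roots in X of F(p,q,X) = 0.    *)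
Definition legendre_slopes (iota : {rmorphism C -> L}) (A B : {mpoly C[2]})
    (P Q : L) (d : nat) (x : 'I_d -> L) : Prop :=
  let F := legendre_poly iota A B P Q in
  [/\ size F = d.+1, injective x
    & F = lead_coef F *: \prod_(i < d) ('X - (x i)%:P)].

(* 1-forms  f dp + g dq  are represented by pairs (f, g); 2-forms           *)
(* k dp/\dq by their coefficient k.                                          *)
Definition dform1 (Dp Dq : L -> L) (w : L * L) : L := Dp w.2 - Dq w.1.
Definition wedge1 (e w : L * L) : L := e.1 * w.2 - e.2 * w.1.

(* the 1-form  lam (x dp + dq), defining the foliation of slope x           *)
Definition slope_form (lam x : L) : L * L := (lam * x, lam).

(* K is the curvature of the 3-web with slopes x1, x2, x3: there are        *)
(* defining 1-forms w_i normalized by w_1 + w_2 + w_3 = 0, and a 1-form eta  *)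
(* with d w_i = eta /\ w_i, and K = d eta.                                   *)
Definition is_curvature3 (Dp Dq : L -> L) (x1 x2 x3 K : L) : Prop :=
  exists (l1 l2 l3 : L) (eta : L * L),
    [/\ [/\ l1 != 0, l2 != 0 & l3 != 0],
        l1 * x1 + l2 * x2 + l3 * x3 = 0 /\ l1 + l2 + l3 = 0,
        [/\ dform1 Dp Dq (slope_form l1 x1) = wedge1 eta (slope_form l1 x1),
            dform1 Dp Dq (slope_form l2 x2) = wedge1 eta (slope_form l2 x2)
          & dform1 Dp Dq (slope_form l3 x3) = wedge1 eta (slope_form l3 x3)]
      & K = dform1 Dp Dq eta].

Definition is_web_curvature (Dp Dq : L -> L) (d : nat) (x : 'I_d -> L)
    (K : L) : Prop :=
  exists Kf : 'I_d -> 'I_d -> 'I_d -> L,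
    (forall i j k : 'I_d, (i < j < k)%N ->
        is_curvature3 Dp Dq (x i) (x j) (x k) (Kf i j k)) /\
    K = \sum_(i < d) \sum_(j < d) \sum_(k < d | (i < j < k)%N) Kf i j k.

(* The complement of the dual line of O in the dual plane is the affine     *)
(* chart (a,b) <-> line {a x + b y + 1 = 0}; there a = p/q, b = -1/q and     *)
(* da/\db = q^-3 dp/\dq.  The 2-form K dp/\dq = (K q^3) da/\db is            *)
(* holomorphic there iff its coefficient k = K q^3, a rational function of   *)
(* (a,b), is regular at every point (a0,b0) of C^2.                          *)
Definition holomorphic_off_dualO (iota : {rmorphism C -> L}) (P Q K : L)
    : Prop :=
  let ev := mmap iota (fun i : 'I_2 => if i == 0 then P / Q else - Q^-1) in
  forall a0 b0 : C, exists f g : {mpoly C[2]},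
    g.@[fun i : 'I_2 => if i == 0 then a0 else b0] != 0 /\
    K * Q ^+ 3 * ev g = ev f.

End DiffModel.

From HB Require Import structures.
From mathcomp Require Import all_boot all_order all_algebra.
From mathcomp Require Import reals.
From mathcomp.real_closed Require Import complex.
From mathcomp Require Import mpoly.
From mathcomp Require Import ring zify.

Set Implicit Arguments.
Unset Strict Implicit.
Unset Printing Implicit Defensive.

Import GRing.Theory Num.Theory.
Local Open Scope ring_scope.

(* The homotheties of P^2 centred at O preserve a homogeneous foliation, hence
   its Legendre transform; on the dual chart they act by q |-> t q, with
   generator E = q d/dq.  The slopes of Leg F are therefore E-fixed, and the
   structure equations of each 3-subweb then force E K = - K.  In the chart
   (a, b) = (p/q, -1/q) of the complement of the dual line of O both
   coordinates have weight -1, while the coefficient K q^3 of K da/\db has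
   weight 2.  A rational function regular at a = b = 0 only has components of
   weight <= 0, so K q^3 = 0. *)

Section Derivation.
Variables (S : comNzRingType) (D : S -> S).
Hypothesis derD : forall u v, D (u + v) = D u + D v.
Hypothesis derM : forall u v, D (u * v) = D u * v + u * D v.

Lemma derivation0 : D 0 = 0.
Proof. by apply: (@addrI _ (D 0)); rewrite -derD !addr0. Qed.

Lemma derivation1 : D 1 = 0.
Proof. by apply: (@addrI _ (D 1)); rewrite addr0 -{3}(mulr1 1) derM mulr1 mul1r. Qed.

Lemma derivationN u : D (- u) = - D u.
Proof. by apply/eqP; rewrite -subr_eq0 opprK -derD addNr derivation0. Qed.

Lemma derivationB u v : D (u - v) = D u - D v.
Proof. by rewrite derD derivationN. Qed.

Lemma derivation_nat k : D k%:R = 0.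
Proof.
elim: k => [|k IHk]; first exact: derivation0.
by rewrite -addn1 natrD derD IHk derivation1 addr0.
Qed.

Lemma derivation_sum (I : Type) (r : seq I) (P : pred I) (F : I -> S) :
  D (\sum_(i <- r | P i) F i) = \sum_(i <- r | P i) D (F i).
Proof. exact: (big_morph D derD derivation0). Qed.

Lemma derivation_mulCl c u : D c = 0 -> D (c * u) = c * D u.
Proof. by move=> Dc; rewrite derM Dc mul0r add0r. Qed.

Lemma derivation_exp_eigen u s k : D u = s * u -> D (u ^+ k) = (k%:R * s) * u ^+ k.
Proof.
move=> Du; elim: k => [|k IHk]; first by rewrite expr0 derivation1 !mul0r.
by rewrite exprS derM IHk Du mulrS; ring.
Qed.

Lemma derivation_prod_eigen (I : Type) (r : seq I) (P : pred I) (u s : I -> S) :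
  (forall i, D (u i) = s i * u i) ->
  D (\prod_(i <- r | P i) u i) =
    (\sum_(i <- r | P i) s i) * \prod_(i <- r | P i) u i.
Proof.
move=> Du; apply: (big_rec2 (fun a b => D b = a * b)).
  by rewrite derivation1 mul0r.
by move=> i a b _ IH; rewrite derM IH Du; ring.
Qed.

Lemma derivation_mmap1_eigen n (g : 'I_n -> S) s (m : 'X_{1..n}) :
  (forall i, D (g i) = s * g i) -> D (mmap1 g m) = ((mdeg m)%:R * s) * mmap1 g m.
Proof.
move=> Dg; rewrite /mmap1 (@derivation_prod_eigen _ _ _ _ (fun i => (m i)%:R * s)).
  by rewrite mdegE natr_sum -mulr_suml.
by move=> i; rewrite (derivation_exp_eigen _ (Dg i)).
Qed.

Lemma derivation_mmap_homog n (R : nzRingType) (f : R -> S) (g : 'I_n -> S) s d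
    (h : {mpoly R[n]}) :
  (forall c, D (f c) = 0) -> (forall i, D (g i) = s * g i) -> h \is d.-homog ->
  D (mmap f g h) = (d%:R * s) * mmap f g h.
Proof.
move=> Df Dg hh; rewrite /mmap derivation_sum mulr_sumr; apply: eq_big_seq => m hm.
rewrite derivation_mulCl // (derivation_mmap1_eigen _ Dg) (dhomog_mf hh hm); ring.
Qed.

End Derivation.

Section FieldDerivation.
Variables (L : fieldType) (E : L -> L).
Hypothesis derD : forall u v, E (u + v) = E u + E v.
Hypothesis derM : forall u v, E (u * v) = E u * v + u * E v.

Lemma derivation_inv_eigen u s : u != 0 -> E u = s * u -> E u^-1 = - s * u^-1.
Proof.
move=> u0 Eu.
have : 0 = s * u * u^-1 + u * E u^-1 by rewrite -(derivation1 derM) -(mulfV u0) derM Eu.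
rewrite -mulrA mulfV // mulr1 => /eqP; rewrite eq_sym addr_eq0 => /eqP h.
by rewrite -[E _]mul1r -(mulVf u0) -mulrA h; ring.
Qed.

Lemma normalizers_common_eigen (l1 l2 l3 x1 x2 x3 : L) :
  l1 != 0 -> x2 != x3 -> E x1 = x1 -> E x2 = x2 -> E x3 = x3 ->
  l1 * x1 + l2 * x2 + l3 * x3 = 0 -> l1 + l2 + l3 = 0 ->
  E l2 = (E l1 / l1) * l2.
Proof.
move=> l10 n23 E1 E2 E3 s1 s2; set mu := E l1 / l1.
have El1 : E l1 = mu * l1 by rewrite /mu divfK.
have t1 : E l1 * x1 + E l2 * x2 + E l3 * x3 = 0.
  have := congr1 E s1; rewrite !derD !derM E1 E2 E3 derivation0 // => h.
  by rewrite -[RHS](subrr 0) -{1}h -{1}s1; ring.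
have t2 : E l1 + E l2 + E l3 = 0.
  by have := congr1 E s2; rewrite !derD derivation0.
have : (E l2 - mu * l2) * (x2 - x3) = 0.
  transitivity ((E l1 * x1 + E l2 * x2 + E l3 * x3) - mu * (l1 * x1 + l2 * x2 + l3 * x3)
    - x3 * ((E l1 + E l2 + E l3) - mu * (l1 + l2 + l3)) + (x3 - x1) * (E l1 - mu * l1)).
    by ring.
  by rewrite t1 s1 t2 s2 El1; ring.
by move/eqP; rewrite mulf_eq0 (subr_eq0 x2) (negbTE n23) orbF subr_eq0 => /eqP.
Qed.

Lemma eigen_sum_eq0 n (v lam : nat -> L) :
  (forall k, E (lam k) = 0) -> (forall k, E (v k) = lam k * v k) ->
  {in gtn n &, injective lam} ->
  \sum_(k < n) v k = 0 -> forall k, (k < n)%N -> v k = 0.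
Proof.
elim: n v => [|n IHn] v Elam Ev lam_inj sum_v0 k; first by [].
rewrite big_ord_recr /= in sum_v0.
have sum_lt : \sum_(i < n) v i = - v n.
  by apply/eqP; rewrite -addr_eq0 sum_v0.
have Esum_lt : \sum_(i < n) lam i * v i = - (lam n * v n).
  have := congr1 E sum_v0; rewrite derD derivation_sum // derivation0 // Ev.
  under eq_bigr do rewrite Ev.
  by move/eqP; rewrite addr_eq0 => /eqP.
have shifted_eq0 : forall k, (k < n)%N -> (lam k - lam n) * v k = 0.
  apply: IHn => // [j|i j hi hj|].
  - by rewrite derM Ev derivationB // !Elam subrr mul0r add0r; ring.
  - by apply: lam_inj; rewrite inE /= ltnS ltnW.
  under eq_bigr do rewrite mulrBl.
  by rewrite sumrB Esum_lt -mulr_sumr sum_lt mulrN subrr.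
have v_lt j : (j < n)%N -> v j = 0.
  move=> jn; have /eqP := shifted_eq0 j jn; rewrite mulf_eq0 subr_eq0.
  case/orP=> [/eqP/lam_inj|/eqP //].
  by rewrite !inE /= ltnS leqnn ltnW // => /(_ isT isT) jn_eq; rewrite jn_eq ltnn in jn.
rewrite ltnS leq_eqVlt => /orP[/eqP->|]; last exact: v_lt.
by apply/eqP; rewrite -oppr_eq0 -sum_lt big1 // => i _; apply: v_lt.
Qed.

End FieldDerivation.

Section PolyEulerDerivation.
Variables (R : idomainType) (E : R -> R).
Hypothesis derD : forall u v, E (u + v) = E u + E v.
Hypothesis derM : forall u v, E (u * v) = E u * v + u * E v.

Definition poly_euler_der (G : {poly R}) : {poly R} := map_poly E G + 'X * G^`().

Let E0 : E 0 = 0. Proof. exact: derivation0. Qed.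

Lemma map_poly_derD G H : map_poly E (G + H) = map_poly E G + map_poly E H.
Proof. by apply/polyP => i; rewrite coefD !coef_map_id0 // coefD derD. Qed.

Lemma map_poly_derM G H : map_poly E (G * H) = map_poly E G * H + G * map_poly E H.
Proof.
apply/polyP => i; rewrite coefD !coefM coef_map_id0 // coefM.
rewrite derivation_sum // -big_split /=; apply: eq_bigr => j _.
by rewrite derM !coef_map_id0.
Qed.

Lemma poly_euler_derD G H :
  poly_euler_der (G + H) = poly_euler_der G + poly_euler_der H.
Proof. by rewrite /poly_euler_der map_poly_derD derivD; ring. Qed.

Lemma poly_euler_derM G H :
  poly_euler_der (G * H) = poly_euler_der G * H + G * poly_euler_der H.
Proof. by rewrite /poly_euler_der map_poly_derM derivM; ring. Qed.

Lemma poly_euler_derC c : poly_euler_der c%:P = (E c)%:P.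
Proof.
rewrite /poly_euler_der derivC mulr0 addr0; apply/polyP => i.
by rewrite coef_map_id0 // !coefC; case: (i == 0)%N.
Qed.

Lemma poly_euler_derX : poly_euler_der 'X = 'X.
Proof.
rewrite /poly_euler_der derivX mulr1 -[RHS]add0r; congr (_ + _).
apply/polyP => i; rewrite coef_map_id0 // coefX coef0.
by case: (i == 1)%N; rewrite ?derivation1.
Qed.

Lemma poly_euler_der_root d c (x : 'I_d -> R) i :
  c != 0 -> injective x ->
  (poly_euler_der (c *: \prod_(j < d) ('X - (x j)%:P))).[x i] = 0 ->
  E (x i) = x i.
Proof.
move=> c0 x_inj; set G := \prod_(j < d | j != i) ('X - (x j)%:P).
have -> : \prod_(j < d) ('X - (x j)%:P) = ('X - (x i)%:P) * G by rewrite (bigD1 i).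
have Gx0 : G.[x i] != 0.
  rewrite horner_prod; apply/prodf_neq0 => j ji.
  by rewrite hornerXsubC subr_eq0; apply: contra ji => /eqP /x_inj ->.
rewrite -mul_polyC !poly_euler_derM derivationB; [|exact: poly_euler_derD..].
rewrite poly_euler_derX !poly_euler_derC.
rewrite !(hornerD, hornerM, hornerN, hornerX, hornerC, hornerXsubC) subrr.
rewrite !(mul0r, mulr0, add0r, addr0) => /eqP.
by rewrite !mulf_eq0 (negbTE c0) (negbTE Gx0) orbF subr_eq0 => /eqP.
Qed.

End PolyEulerDerivation.

Lemma legendre_slopes_fixed (C L : fieldType) (E : L -> L) (iota : {rmorphism C -> L})
    d (A B : {mpoly C[2]}) (P Q : L) (x : 'I_d -> L) :
  (forall u v, E (u + v) = E u + E v) ->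
  (forall u v, E (u * v) = E u * v + u * E v) ->
  (forall c, E (iota c) = 0) -> E P = 0 -> E Q = Q ->
  A \is d.-homog -> B \is d.-homog ->
  legendre_slopes iota A B P Q x -> forall i, E (x i) = x i.
Proof.
move=> derD derM Eiota EP EQ hA hB [sizeF x_inj F_split] i.
set F := legendre_poly iota A B P Q in sizeF F_split *.
have eulerD := poly_euler_derD derD; have eulerM := poly_euler_derM derD derM.
have eulerC := poly_euler_derC derD; have eulerX := poly_euler_derX derD derM.
have euler_ev h : h \is d.-homog ->
    poly_euler_der E (mmap (fun c => (iota c)%:P)
      (fun j : 'I_2 => if j == 0 then 'X else P *: 'X + Q%:P) h) =
    (d%:R * 1) * mmap (fun c => (iota c)%:P)
      (fun j : 'I_2 => if j == 0 then 'X else P *: 'X + Q%:P) h.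
  apply: derivation_mmap_homog => // [c|j]; first by rewrite eulerC Eiota.
  case: (j == 0); first by rewrite eulerX mul1r.
  by rewrite -mul_polyC eulerD eulerM !eulerC eulerX EP EQ; ring.
have eulerF : poly_euler_der E F = d%:R * F.
  rewrite /F /legendre_poly /= derivationB // euler_ev //.
  by rewrite -[P *: mmap _ _ A]mul_polyC eulerM eulerC EP euler_ev //; ring.
apply: (poly_euler_der_root derD derM (c := lead_coef F)) => //.
  by rewrite lead_coef_eq0 -size_poly_eq0 sizeF.
rewrite -F_split eulerF hornerM F_split hornerZ horner_prod (bigD1 i) //=.
by rewrite hornerXsubC subrr !(mul0r, mulr0).
Qed.

Section QEuler.
Variables (L : fieldType) (Dp Dq : L -> L) (Q : L).
Hypothesis DpD : forall u v, Dp (u + v) = Dp u + Dp v.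
Hypothesis DpM : forall u v, Dp (u * v) = Dp u * v + u * Dp v.
Hypothesis DqD : forall u v, Dq (u + v) = Dq u + Dq v.
Hypothesis DqM : forall u v, Dq (u * v) = Dq u * v + u * Dq v.
Hypothesis DpDq : forall u, Dp (Dq u) = Dq (Dp u).
Hypothesis DpQ : Dp Q = 0.
Hypothesis DqQ : Dq Q = 1.

(* Infinitesimal generator of the action q |-> t q, on the dual chart, of the
   homotheties of P^2 centred at O. *)
Definition q_euler u := Q * Dq u.
Local Notation E := q_euler.

Lemma q_eulerD u v : E (u + v) = E u + E v.
Proof. by rewrite /E DqD mulrDr. Qed.

Lemma q_eulerM u v : E (u * v) = E u * v + u * E v.
Proof. by rewrite /E DqM; ring. Qed.

Lemma q_euler_Dp u : E (Dp u) = Dp (E u).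
Proof. by rewrite /E DpM DpQ mul0r add0r DpDq. Qed.

Lemma q_euler_Dq u : E (Dq u) = Dq (E u) - Dq u.
Proof. by rewrite /E DqM DqQ mul1r; ring. Qed.

(* Apply E to d w = eta /\ w for w = l (x dp + dq) and subtract mu times
   the original equation. *)
Lemma structure_eqn_q_euler (l x mu : L) (eta : L * L) :
  l != 0 -> E l = mu * l -> E x = x ->
  dform1 Dp Dq (slope_form l x) = wedge1 eta (slope_form l x) ->
  Dp mu - E eta.1 = x * (Dq mu - E eta.2 - eta.2).
Proof.
rewrite /dform1 /wedge1 /= => l0 El Ex e.
have h := congr1 E e.
rewrite (derivationB q_eulerD) q_euler_Dp q_euler_Dq (derivationB q_eulerD)
  !q_eulerM El Ex in h.
rewrite !(DpM, DqM, derivationB DqD, derivationB DpD, DqD, DpD) /E in h e.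
apply/eqP; rewrite -subr_eq0; apply/eqP; apply: (mulfI l0); rewrite mulr0.
match type of h with ?a = ?b => match type of e with ?c = ?c' =>
  transitivity ((a - b) - mu * (c - c')); first by rewrite /E; ring end end.
by rewrite h e !subrr mulr0 subrr.
Qed.

Lemma curvature3_q_euler x1 x2 x3 K :
  x1 != x2 -> x2 != x3 -> E x1 = x1 -> E x2 = x2 -> E x3 = x3 ->
  is_curvature3 Dp Dq x1 x2 x3 K -> E K = - K.
Proof.
move=> n12 n23 E1 E2 E3 [l1 [l2 [l3 [eta [[l10 l20 _] [s1 s2] [e1 e2 _] ->]]]]].
set mu := E l1 / l1.
have El1 : E l1 = mu * l1 by rewrite /mu divfK.
have El2 : E l2 = mu * l2.
  exact: (normalizers_common_eigen q_eulerD q_eulerM l10 n23 E1 E2 E3 s1 s2).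
have k1 := structure_eqn_q_euler l10 El1 E1 e1.
have k2 := structure_eqn_q_euler l20 El2 E2 e2.
have eta2 : E eta.2 = Dq mu - eta.2.
  have /eqP : (x1 - x2) * (Dq mu - E eta.2 - eta.2) = 0.
    by rewrite mulrBl -k1 -k2 subrr.
  rewrite mulf_eq0 subr_eq0 (negbTE n12) /= => /eqP h.
  by rewrite -[LHS]addr0 -h; ring.
have eta1 : E eta.1 = Dp mu.
  by apply/eqP; rewrite eq_sym -subr_eq0 k1 eta2; apply/eqP; ring.
rewrite /dform1 (derivationB q_eulerD) q_euler_Dp q_euler_Dq eta1 eta2.
by rewrite (derivationB DpD) DpDq; ring.
Qed.

Lemma web_curvature_q_euler d (x : 'I_d -> L) K :
  injective x -> (forall i, E (x i) = x i) -> is_web_curvature Dp Dq x K ->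
  E K = - K.
Proof.
move=> x_inj Ex [Kf [Kf3 ->]].
have x_neq (i j : 'I_d) : (i < j)%N -> x i != x j.
  by move=> ij; rewrite (inj_eq x_inj) -val_eqE /= ltn_eqF.
rewrite (derivation_sum q_eulerD) -sumrN; apply: eq_bigr => i _.
rewrite (derivation_sum q_eulerD) -sumrN; apply: eq_bigr => j _.
rewrite (derivation_sum q_eulerD) -sumrN; apply: eq_bigr => k /andP[ij jk].
apply: (curvature3_q_euler (x_neq _ _ ij) (x_neq _ _ jk) (Ex i) (Ex j) (Ex k)).
by apply: Kf3; rewrite ij jk.
Qed.

Lemma q_neq0 : Q != 0.
Proof.
by apply/eqP => Q0; move: DqQ; rewrite Q0 derivation0 // => /eqP; rewrite eq_sym oner_eq0.
Qed.

Lemma q_euler_dual_coords P (i : 'I_2) : Dq P = 0 ->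
  E (if i == 0 then P / Q else - Q^-1) = - (if i == 0 then P / Q else - Q^-1).
Proof.
have EQ : E Q = 1 * Q by rewrite /E DqQ mulr1 mul1r.
have EQinv := derivation_inv_eigen q_eulerM q_neq0 EQ.
move=> DqP; case: (i == 0); last by rewrite (derivationN q_eulerD) EQinv mulN1r.
have EP : E P = 0 by rewrite /E DqP mulr0.
by rewrite q_eulerM EP EQinv; ring.
Qed.

End QEuler.

Lemma sum_by_fibers (V : nmodType) (T : eqType) (s : seq T) (h : T -> nat) N
    (F : T -> V) :
  (forall m, m \in s -> h m < N)%N ->
  \sum_(k < N) \sum_(m <- s | h m == k) F m = \sum_(m <- s) F m.
Proof.
move=> hN; rewrite (exchange_big_dep xpredT) //= [RHS]big_seq_cond.
rewrite big_seq_cond; apply: eq_bigr => m /andP[ms _].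
by rewrite (big_pred1 (Ordinal (hN m ms))) // => k; rewrite eq_sym -val_eqE.
Qed.

Lemma meval_origin (C : comNzRingType) n (g : {mpoly C[n]}) (z : 'I_n -> C) :
  (forall i, z i = 0) -> g.@[z] = \sum_(m <- msupp g | mdeg m == 0%N) g@_m.
Proof.
move=> z0; rewrite mevalE [RHS]big_mkcond /=; apply: eq_bigr => m _.
rewrite mdeg_eq0; case: (pickP (fun i => m i != 0%N)) => [i mi | m0].
  rewrite (bigD1 i) //= z0 expr0n (negbTE mi) mul0r mulr0.
  by case: (m =P 0%MM) mi => [->|]; rewrite ?mnm0E.
have -> : m = 0%MM by apply/mnmP => i; rewrite mnm0E; apply/eqP/negbFE/m0.
by rewrite eqxx big1 ?mulr1 // => i _; rewrite mnm0E.
Qed.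

Section PositiveWeight.
Variables (C L : fieldType) (iota : {rmorphism C -> L}) (E : L -> L).
Hypothesis derD : forall u v, E (u + v) = E u + E v.
Hypothesis derM : forall u v, E (u * v) = E u * v + u * E v.
Hypothesis E_iota : forall c, E (iota c) = 0.
Hypothesis natr_inj : injective (fun k : nat => k%:R : L).
Variables (n : nat) (G : 'I_n -> L).
Hypothesis EG : forall i, E (G i) = - G i.

Let term (p : {mpoly C[n]}) m := iota p@_m * mmap1 G m.

Let E_term p m : E (term p m) = - (mdeg m)%:R * term p m.
Proof.
rewrite /term derivation_mulCl // (derivation_mmap1_eigen derM (s := -1)).
  by ring.
by move=> i; rewrite EG mulN1r.
Qed.

(* As the G i have weight -1, the homogeneous components of f have weights
   <= 0, while r g_0 has weight w > 0; comparing components of weight w in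
   r g = f gives r g_0 = 0. *)
Lemma regular_pos_weight_eq0 w r (f g : {mpoly C[n]}) (z : 'I_n -> C) :
  (0 < w)%N -> E r = w%:R * r -> (forall i, z i = 0) -> g.@[z] != 0 ->
  r * mmap iota G g = mmap iota G f -> r = 0.
Proof.
move=> w_gt0 Er z0 gz0 rgf.
pose v k := \sum_(m <- msupp g | mdeg m == k) r * term g m
          - \sum_(m <- msupp f | (mdeg m + w)%N == k) term f m.
pose lam (k : nat) : L := w%:R - k%:R.
have Ev k : E (v k) = lam k * v k.
  rewrite /v (derivationB derD) !(derivation_sum derD) mulrBr !mulr_sumr.
  congr (_ - _); apply: eq_bigr => m /eqP <-; rewrite /lam.
    by rewrite derM Er E_term; ring.
  by rewrite E_term natrD; ring.
have sum_v : \sum_(k < msize f + msize g + w) v k = 0.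
  rewrite sumrB !sum_by_fibers => [|m /msize_mdeg_lt|m /msize_mdeg_lt]; try lia.
  by rewrite -mulr_sumr; apply/eqP; rewrite subr_eq0; apply/eqP.
have v0 : v 0%N = 0.
  apply: (eigen_sum_eq0 derD derM _ Ev _ sum_v); last by rewrite addn_gt0 w_gt0 orbT.
    by move=> k; rewrite (derivationB derD) !(derivation_nat derD derM) subrr.
  by move=> j k _ _ /subrI /natr_inj.
have : r * iota g.@[z] = 0.
  rewrite -[RHS]v0 meval_origin // rmorph_sum mulr_sumr /v.
  rewrite [X in _ - X]big_pred0 ?subr0 => [|m]; last first.
    by rewrite addn_eq0 (gtn_eqF w_gt0) andbF.
  apply: eq_bigr => m; rewrite mdeg_eq0 => /eqP ->.
  by rewrite /term mmap11 mulr1.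
by move/eqP; rewrite mulf_eq0 fmorph_eq0 (negbTE gz0) orbF => /eqP.
Qed.

End PositiveWeight.

Theorem mainTheorem4 (R : realType) (d : nat) (A B : {mpoly (complex R)[2]}) :
  homogeneous_foliation d A B ->
  forall (L : fieldType) (iota : {rmorphism complex R -> L})
         (Dp Dq : L -> L) (P Q : L) (x : 'I_d -> L) (K : L),
    dual_chart_model iota Dp Dq P Q ->
    legendre_slopes iota A B P Q x ->
    is_web_curvature Dp Dq x K ->
    holomorphic_off_dualO iota P Q K ->
    K = 0.
Proof.
move=> [hA hB _ _] L iota Dp Dq P Q x K
  [[DpD DpM] [DqD DqM] DpDq Diota [_ DqP DpQ DqQ]] slopes curv holo.
pose E := q_euler Dq Q.
have ED u v : E (u + v) = E u + E v := q_eulerD Q DqD u v.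
have EM u v : E (u * v) = E u * v + u * E v := q_eulerM Q DqM u v.
have E_iota c : E (iota c) = 0 by rewrite /E /q_euler (Diota c).2 mulr0.
have EP : E P = 0 by rewrite /E /q_euler DqP mulr0.
have EQ : E Q = Q by rewrite /E /q_euler DqQ mulr1.
have Ex := legendre_slopes_fixed ED EM E_iota EP EQ hA hB slopes.
have EK : E K = - K.
  by apply: (web_curvature_q_euler DpD DpM DqD DqM DpDq DpQ DqQ _ Ex curv); case: slopes.
have natr_inj : injective (fun k : nat => k%:R : L).
  by move=> j k /=; rewrite -!(rmorph_nat iota) => /fmorph_inj/eqP; rewrite eqr_nat => /eqP.
have [f [g [gz0 holo0]]] := holo 0 0.
have /eqP : K * Q ^+ 3 = 0.
  apply: (regular_pos_weight_eq0 ED EM E_iota natr_inj _ (w := 2) _ _ _ gz0 holo0) => //.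
  - by move=> i; apply: q_euler_dual_coords.
  - by rewrite EM EK (derivation_exp_eigen EM 3 (s := 1)) ?mul1r //; ring.
  - by move=> i; case: (i == 0).
by rewrite mulf_eq0 expf_eq0 (negbTE (q_neq0 DqD DqQ)) andbF orbF => /eqP.
Qed.
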